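(* Let $N\in\mathbb{N}$ and consider the infinite $N$-ary tree with vertex set $V$, conductance $1$ on every edge and base point $o=\emptyset$. For $x\in V$ let $v_x$ be the potential solving $\Delta v_x=\delta_\emptyset-\delta_x$ in the energy space. If $x,y,z\in V$ satisfy $x\le y\le z$ in the prefix order (i.e., $y=xr$ and $z=ys$ for some words $r,s$), then $$\mathcal E(v_x-v_y,\,v_y-v_z)=0.$$
   Context: $V$ is the set of finite words over $\{1,\dots,N\}$ including the empty word $\emptyset$; edges are exactly the pairs $\{\omega,\omega i\}$ ($\omega i$ = $\omega$ with letter $i$ appended); concatenation of words is written by juxtaposition. The Laplacian is $(\Delta v)(x)=\sum_{y\sim x}(v(x)-v(y))$. The energy form is $\mathcal E(u',u)=\sum_{x\in V}\sum_{y\sim x}\overline{(u'(x)-u'(y))}(u(x)-u(y))$, and the energy space $E$ is the completion (modulo constants) of functions with $\mathcal E(u,u)<\infty$; $v_x\in E$ is the solution, unique up to additive constants, of $\Delta v_x=\delta_\emptyset-\delta_x$ (with $v_\emptyset$ constant). *)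

From Stdlib Require Import Reals List.
From Coquelicot Require Import Coquelicot.
Import ListNotations.
Open Scope R_scope.

(* Words over {1,...,N}; a word is a list of letters, [] is the root (empty word). *)
Definition word := list nat.

Definition is_vertex (N : nat) (w : word) : Prop :=
  List.Forall (fun i => (1 <= i <= N)%nat) w.

Definition parent_list (x : word) : list word :=
  match x with [] => [] | _ :: _ => [removelast x] end.
Definition children (N : nat) (x : word) : list word :=
  map (fun i => x ++ [i]) (seq 1 N).
Definition nbrs (N : nat) (x : word) : list word := parent_list x ++ children N x.

Definition Csum (l : list C) : C := fold_right Cplus (RtoC 0) l.

Definition lap (N : nat) (v : word -> C) (x : word) : C :=
  Csum (map (fun y => Cminus (v x) (v y)) (nbrs N x)).

Definition energy_density (N : nat) (u' u : word -> C) (x : word) : C :=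
  Csum (map (fun y => Cmult (Cconj (Cminus (u' x) (u' y))) (Cminus (u x) (u y)))
            (nbrs N x)).

Definition has_sum_V (N : nat) (f : word -> C) (S : C) : Prop :=
  forall eps, 0 < eps ->
    exists F0 : list word, List.Forall (is_vertex N) F0 /\
      forall F : list word, NoDup F -> List.Forall (is_vertex N) F -> incl F0 F ->
        Cmod (Cminus (Csum (map f F)) S) < eps.

Definition energy_is (N : nat) (u' u : word -> C) (S : C) : Prop :=
  has_sum_V N (energy_density N u' u) S.

Definition finite_energy (N : nat) (u : word -> C) : Prop :=
  exists S, energy_is N u u S.

Definition delta (a : word) (w : word) : C :=
  if list_eq_dec Nat.eq_dec w a then RtoC 1 else RtoC 0.

(* v is (a representative of) the potential v_x: the element of the energy space
   with Delta v = delta_root - delta_x, characterised (as in Jorgensen--Pearse)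
   by the reproducing identity E(v, u) = 2 (u(root) - u(x)) for every finite-energy u
   (the factor 2 comes from the convention that E counts each edge twice, and makes
   the identity consistent with Delta v = delta_root - delta_x). *)
Definition is_potential (N : nat) (x : word) (v : word -> C) : Prop :=
  finite_energy N v /\
  (forall w, is_vertex N w -> lap N v w = Cminus (delta [] w) (delta x w)) /\
  (forall u, finite_energy N u ->
     energy_is N v u (Cmult (RtoC 2) (Cminus (u []) (u x)))).

(* Testing the reproducing identity of v_y against the indicator of the subtree
   below a vertex p gives v_y(p) - v_y(parent p) = -1 whenever p is a nonempty
   prefix of y, because the only edge leaving that subtree is {parent p, p}.
   Hence v_y(w) = v_y(root) - |w| for every prefix w of y.  Expanding
   E(v_x - v_y, v_y - v_z) by bilinearity and the reproducing identities leaves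
   2 [(v_y(y) - v_y(x)) - (v_z(y) - v_z(x))], and both differences equal |x| - |y|. *)
From Stdlib Require Import Reals List Lra Lia.
From Coquelicot Require Import Coquelicot.
Import ListNotations.
Open Scope R_scope.

Ltac C_ring := apply injective_projections; simpl; ring.

Lemma Csum_app {A} (f : A -> C) (l1 l2 : list A) :
  Csum (map f (l1 ++ l2)) = Cplus (Csum (map f l1)) (Csum (map f l2)).
Proof. induction l1 as [|a l1 IH]; simpl; [C_ring|]. rewrite IH. C_ring. Qed.

Lemma Csum_map_minus {A} (f g : A -> C) (l : list A) :
  Csum (map (fun a => Cminus (f a) (g a)) l) = Cminus (Csum (map f l)) (Csum (map g l)).
Proof. induction l as [|a l IH]; simpl; [C_ring|]. rewrite IH. C_ring. Qed.

Lemma Csum_map_plus {A} (f g : A -> C) (l : list A) :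
  Csum (map (fun a => Cplus (f a) (g a)) l) = Cplus (Csum (map f l)) (Csum (map g l)).
Proof. induction l as [|a l IH]; simpl; [C_ring|]. rewrite IH. C_ring. Qed.

Lemma Csum_map_conj {A} (f : A -> C) (l : list A) :
  Cconj (Csum (map f l)) = Csum (map (fun a => Cconj (f a)) l).
Proof. induction l as [|a l IH]; simpl; [C_ring|]. rewrite <- IH. C_ring. Qed.

Lemma Csum_map_zero {A} (f : A -> C) (l : list A) :
  (forall a, In a l -> f a = RtoC 0) -> Csum (map f l) = RtoC 0.
Proof.
  induction l as [|a l IH]; simpl; intros Hf; [reflexivity|].
  rewrite Hf, IH by auto. C_ring.
Qed.

Lemma Csum_map_single_support {A} (dec : forall a b : A, {a = b} + {a <> b})
    (f : A -> C) (l : list A) (a : A) :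
  NoDup l -> (forall b, b <> a -> f b = RtoC 0) ->
  Csum (map f l) = if in_dec dec a l then f a else RtoC 0.
Proof.
  induction l as [|b l IH]; intros Hl Hf; simpl; [reflexivity|].
  inversion Hl; subst. rewrite IH by auto.
  destruct (dec b a) as [->|Hba].
  - destruct (in_dec dec a l); [contradiction|]. C_ring.
  - rewrite Hf by auto. destruct (in_dec dec a l); C_ring.
Qed.

Lemma Csum_map_two_support {A} (dec : forall a b : A, {a = b} + {a <> b})
    (f : A -> C) (l : list A) (p q : A) :
  NoDup l -> p <> q -> In p l -> In q l ->
  (forall w, w <> p -> w <> q -> f w = RtoC 0) ->
  Csum (map f l) = Cplus (f p) (f q).
Proof.
  intros Hl Hpq Hp Hq Hf.
  set (fp w := if dec w p then f w else RtoC 0).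
  set (fq w := if dec w p then RtoC 0 else f w).
  transitivity (Csum (map (fun w => Cplus (fp w) (fq w)) l)).
  { apply f_equal, map_ext. intro w. unfold fp, fq. destruct (dec w p); C_ring. }
  rewrite Csum_map_plus, (Csum_map_single_support dec fp l p Hl),
    (Csum_map_single_support dec fq l q Hl).
  - unfold fp, fq.
    destruct (in_dec dec p l); [|contradiction]. destruct (in_dec dec q l); [|contradiction].
    destruct (dec p p); [|congruence]. destruct (dec q p); [congruence|]. C_ring.
  - intros b Hb. unfold fq. destruct (dec b p); [reflexivity|]. apply Hf; auto.
  - intros b Hb. unfold fp. destruct (dec b p); congruence.
Qed.

Lemma has_sum_V_ext N (f g : word -> C) (S : C) :
  (forall w, f w = g w) -> has_sum_V N f S -> has_sum_V N g S.
Proof.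
  intros Efg Hf eps Heps. destruct (Hf eps Heps) as [F0 [HF0 H]].
  exists F0. split; [exact HF0|]. intros F HF HFv HF0F.
  rewrite <- (map_ext _ _ Efg). auto.
Qed.

Lemma has_sum_V_minus N (f g : word -> C) (S T : C) :
  has_sum_V N f S -> has_sum_V N g T ->
  has_sum_V N (fun w => Cminus (f w) (g w)) (Cminus S T).
Proof.
  intros Hf Hg eps Heps.
  destruct (Hf (eps / 2)) as [F1 [HF1 H1]]; [lra|].
  destruct (Hg (eps / 2)) as [F2 [HF2 H2]]; [lra|].
  exists (F1 ++ F2). split; [apply List.Forall_app; auto|].
  intros F HF HFv HF12.
  specialize (H1 F HF HFv (fun a h => HF12 a (in_or_app _ _ _ (or_introl h)))).
  specialize (H2 F HF HFv (fun a h => HF12 a (in_or_app _ _ _ (or_intror h)))).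
  rewrite Csum_map_minus.
  replace (Cminus (Cminus (Csum (map f F)) (Csum (map g F))) (Cminus S T))
    with (Cplus (Cminus (Csum (map f F)) S) (Copp (Cminus (Csum (map g F)) T))) by C_ring.
  eapply Rle_lt_trans; [apply Cmod_triangle|]. rewrite Cmod_opp. lra.
Qed.

Lemma has_sum_V_conj N (f : word -> C) (S : C) :
  has_sum_V N f S -> has_sum_V N (fun w => Cconj (f w)) (Cconj S).
Proof.
  intros Hf eps Heps. destruct (Hf eps Heps) as [F0 [HF0 H]].
  exists F0. split; [exact HF0|]. intros F HF HFv HF0F.
  rewrite <- Csum_map_conj.
  replace (Cminus (Cconj (Csum (map f F))) (Cconj S))
    with (Cconj (Cminus (Csum (map f F)) S)) by C_ring.
  rewrite Cmod_conj. auto.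
Qed.

Lemma has_sum_V_unique N (f : word -> C) (S T : C) :
  has_sum_V N f S -> has_sum_V N f T -> S = T.
Proof.
  intros Hf Hg.
  assert (Hsmall : forall eps, 0 < eps -> Cmod (Cminus S T) < eps).
  { intros eps Heps.
    destruct (Hf (eps / 2)) as [F1 [HF1 H1]]; [lra|].
    destruct (Hg (eps / 2)) as [F2 [HF2 H2]]; [lra|].
    set (F := nodup (list_eq_dec Nat.eq_dec) (F1 ++ F2)).
    assert (HF12 : forall a, In a (F1 ++ F2) -> In a F) by (intros; apply nodup_In; auto).
    assert (HFv : List.Forall (is_vertex N) F).
    { apply Forall_forall. intros a Ha. apply nodup_In, in_app_or in Ha as [Ha|Ha].
      - eapply Forall_forall in HF1; eauto.
      - eapply Forall_forall in HF2; eauto. }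
    specialize (H1 F (NoDup_nodup _ _) HFv (fun a h => HF12 a (in_or_app _ _ _ (or_introl h)))).
    specialize (H2 F (NoDup_nodup _ _) HFv (fun a h => HF12 a (in_or_app _ _ _ (or_intror h)))).
    replace (Cminus S T)
      with (Cplus (Copp (Cminus (Csum (map f F)) S)) (Cminus (Csum (map f F)) T)) by C_ring.
    eapply Rle_lt_trans; [apply Cmod_triangle|]. rewrite Cmod_opp. lra. }
  assert (Hzero : Cmod (Cminus S T) = 0).
  { destruct (Cmod_ge_0 (Cminus S T)) as [Hpos|]; [|auto].
    specialize (Hsmall _ Hpos). lra. }
  apply Cmod_eq_0 in Hzero.
  replace S with (Cplus (Cminus S T) T) by C_ring. rewrite Hzero. C_ring.
Qed.

Lemma energy_is_subl N (a b u : word -> C) (S T : C) :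
  energy_is N a u S -> energy_is N b u T ->
  energy_is N (fun w => Cminus (a w) (b w)) u (Cminus S T).
Proof.
  intros Ha Hb. eapply has_sum_V_ext; [|exact (has_sum_V_minus _ _ _ _ _ Ha Hb)].
  intro w. unfold energy_density. rewrite <- Csum_map_minus.
  apply f_equal, map_ext. intro y. C_ring.
Qed.

Lemma energy_is_subr N (u a b : word -> C) (S T : C) :
  energy_is N u a S -> energy_is N u b T ->
  energy_is N u (fun w => Cminus (a w) (b w)) (Cminus S T).
Proof.
  intros Ha Hb. eapply has_sum_V_ext; [|exact (has_sum_V_minus _ _ _ _ _ Ha Hb)].
  intro w. unfold energy_density. rewrite <- Csum_map_minus.
  apply f_equal, map_ext. intro y. C_ring.
Qed.

Lemma energy_is_conj N (u v : word -> C) (S : C) :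
  energy_is N u v S -> energy_is N v u (Cconj S).
Proof.
  intros H. eapply has_sum_V_ext; [|exact (has_sum_V_conj _ _ _ H)].
  intro w. unfold energy_density. rewrite Csum_map_conj.
  apply f_equal, map_ext. intro y. C_ring.
Qed.

Lemma prefix_dec (p w : word) : {exists t, w = p ++ t} + {~ exists t, w = p ++ t}.
Proof.
  destruct (list_eq_dec Nat.eq_dec (firstn (length p) w) p) as [E|E]; [left|right].
  - exists (skipn (length p) w). rewrite <- E at 1. symmetry. apply firstn_skipn.
  - intros [t ->]. apply E. clear. induction p as [|a p IH]; simpl; congruence.
Qed.

Definition subtree_ind (p : word) (w : word) : C :=
  if prefix_dec p w then RtoC 1 else RtoC 0.

Lemma subtree_ind_app (p t : word) : subtree_ind p (p ++ t) = RtoC 1.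
Proof.
  unfold subtree_ind. destruct (prefix_dec p (p ++ t)) as [|Hn]; [reflexivity|].
  exfalso. apply Hn. exists t. reflexivity.
Qed.

Lemma subtree_ind_self (p : word) : subtree_ind p p = RtoC 1.
Proof. rewrite <- (app_nil_r p) at 2. apply subtree_ind_app. Qed.

Lemma subtree_ind_short (p w : word) :
  (length w < length p)%nat -> subtree_ind p w = RtoC 0.
Proof.
  intros Hlen. unfold subtree_ind. destruct (prefix_dec p w) as [[t ->]|]; [|reflexivity].
  rewrite length_app in Hlen. lia.
Qed.

Lemma subtree_ind_removelast (p w : word) :
  w <> p -> subtree_ind p (removelast w) = subtree_ind p w.
Proof.
  intros Hwp. destruct w as [|a w _] using rev_ind; [reflexivity|].
  rewrite removelast_last. unfold subtree_ind.
  destruct (prefix_dec p w) as [[t Ht]|Hn], (prefix_dec p (w ++ [a])) as [Hpre|Hn'];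
    try reflexivity; exfalso.
  - apply Hn'. exists (t ++ [a]). rewrite Ht, app_assoc. reflexivity.
  - destruct Hpre as [t Ht]. destruct t as [|b t _] using rev_ind.
    + rewrite app_nil_r in Ht. congruence.
    + rewrite app_assoc in Ht. apply app_inj_tail in Ht as [-> _]. apply Hn. eauto.
Qed.

Lemma is_vertex_app_l N (a b : word) : is_vertex N (a ++ b) -> is_vertex N a.
Proof. intros H. apply List.Forall_app in H. tauto. Qed.

Section SubtreeEnergy.

Variables (N : nat) (p : word) (u : word -> C).
Hypotheses (Hp : p <> []) (Hpv : is_vertex N p).

Let q := removelast p.

Lemma p_eq_q_app_last : p = q ++ [last p 0%nat].
Proof. apply app_removelast_last, Hp. Qed.

Lemma length_p_eq_S_q : length p = S (length q).
Proof. rewrite p_eq_q_app_last at 1. rewrite length_app. simpl. lia. Qed.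

Lemma energy_density_subtree_ind_off (w : word) :
  w <> p -> w <> q -> energy_density N (subtree_ind p) u w = RtoC 0.
Proof.
  intros Hwp Hwq. apply Csum_map_zero. intros y Hy. apply in_app_or in Hy as [Hy|Hy].
  - destruct w as [|a w0] eqn:Ew; cbn [parent_list In] in Hy; [contradiction|].
    rewrite <- Ew in *. destruct Hy as [<-|[]].
    rewrite subtree_ind_removelast by auto. C_ring.
  - apply in_map_iff in Hy as [i [<- _]].
    rewrite <- (subtree_ind_removelast p (w ++ [i])), removelast_last; [C_ring|].
    intros E. apply Hwq. unfold q. rewrite <- E. symmetry. apply removelast_last.
Qed.

Lemma energy_density_subtree_ind_top :
  energy_density N (subtree_ind p) u p = Cminus (u p) (u q).
Proof.
  unfold energy_density, nbrs.
  replace (parent_list p) with [q] by (unfold q; destruct p; [congruence|reflexivity]).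
  rewrite Csum_app, (Csum_map_zero _ (children N p)).
  - simpl. rewrite subtree_ind_self, subtree_ind_short by (rewrite length_p_eq_S_q; lia). C_ring.
  - intros y Hy. apply in_map_iff in Hy as [i [<- _]].
    rewrite subtree_ind_app, subtree_ind_self. C_ring.
Qed.

Lemma energy_density_subtree_ind_parent :
  energy_density N (subtree_ind p) u q = Cminus (u p) (u q).
Proof.
  pose proof p_eq_q_app_last as Ep. set (j := last p 0%nat) in Ep.
  assert (Hj : (1 <= j <= N)%nat).
  { assert (Hv := Hpv). unfold is_vertex in Hv. rewrite Ep in Hv.
    apply List.Forall_app in Hv as [_ Hv]. inversion Hv; auto. }
  unfold energy_density, nbrs, children. rewrite Csum_app, map_map.
  rewrite (Csum_map_zero _ (parent_list q)).
  - rewrite (Csum_map_single_support Nat.eq_dec _ (seq 1 N) j (seq_NoDup _ _)).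
    + destruct (in_dec Nat.eq_dec j (seq 1 N)) as [_|Hn].
      * rewrite <- Ep, subtree_ind_self, subtree_ind_short by (rewrite length_p_eq_S_q; lia).
        C_ring.
      * exfalso. apply Hn, in_seq. lia.
    + intros i Hi.
      assert (Hqi : q ++ [i] <> p)
        by (rewrite Ep; intros E; apply app_inj_tail in E as [_ E]; congruence).
      rewrite <- (subtree_ind_removelast p (q ++ [i]) Hqi), removelast_last,
        subtree_ind_short by (rewrite length_p_eq_S_q; lia). C_ring.
  - intros y Hy. destruct q as [|a q0] eqn:Eq; cbn [parent_list In] in Hy; [contradiction|].
    destruct Hy as [<-|[]].
    assert (length (removelast (a :: q0)) <= length (a :: q0))%nat.
    { rewrite (app_removelast_last 0%nat (l := a :: q0)) at 2 by discriminate.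
      rewrite length_app. lia. }
    rewrite <- Eq in *. rewrite !subtree_ind_short by (rewrite length_p_eq_S_q; lia). C_ring.
Qed.

(* The only edge leaving the subtree below p is {q, p}, counted once from each end. *)
Lemma energy_is_subtree_ind :
  energy_is N (subtree_ind p) u (Cmult (RtoC 2) (Cminus (u p) (u q))).
Proof.
  assert (Hpq : p <> q) by (intros E; assert (H := length_p_eq_S_q); rewrite <- E in H; lia).
  intros eps Heps. exists [p; q]. split.
  - repeat constructor; auto.
    apply (is_vertex_app_l N q [last p 0%nat]). rewrite <- p_eq_q_app_last. exact Hpv.
  - intros F HF _ HpqF.
    rewrite (Csum_map_two_support (list_eq_dec Nat.eq_dec) _ F p q HF Hpq), energy_density_subtree_ind_top,
      energy_density_subtree_ind_parent.
    + replace (Cminus _ _) with (RtoC 0) by C_ring. rewrite Cmod_0. exact Heps.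
    + apply HpqF. simpl. auto.
    + apply HpqF. simpl. auto.
    + intros w. apply energy_density_subtree_ind_off.
Qed.

End SubtreeEnergy.

Lemma potential_edge N (y p s : word) (v : word -> C) :
  p <> [] -> is_vertex N y -> y = p ++ s -> is_potential N y v ->
  Cminus (v p) (v (removelast p)) = RtoC (-1).
Proof.
  intros Hp Hy Eyp [_ [_ Hrep]].
  assert (Hpv : is_vertex N p) by (subst y; eapply is_vertex_app_l; eauto).
  assert (Hind := energy_is_subtree_ind N p v Hp Hpv).
  assert (Hfin : finite_energy N (subtree_ind p)) by (eexists; apply energy_is_subtree_ind; auto).
  assert (E := has_sum_V_unique _ _ _ _ (energy_is_conj _ _ _ _ (Hrep _ Hfin)) Hind).
  rewrite Eyp, subtree_ind_app, subtree_ind_short in E by (destruct p; simpl; [congruence|lia]).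
  apply injective_projections; [apply (f_equal fst) in E|apply (f_equal snd) in E];
    simpl in *; lra.
Qed.

Lemma potential_on_prefix N (y w s : word) (v : word -> C) :
  is_vertex N y -> is_potential N y v -> y = w ++ s ->
  v w = Cminus (v []) (RtoC (INR (length w))).
Proof.
  intros Hy Pv. revert s. induction w as [|i w IH] using rev_ind; intros s Eyw.
  - simpl. C_ring.
  - assert (Hedge := potential_edge N y (w ++ [i]) s v ltac:(destruct w; discriminate)
                       Hy Eyw Pv).
    rewrite removelast_last in Hedge.
    rewrite IH with (s := i :: s) in Hedge by (rewrite Eyw, <- app_assoc; reflexivity).
    rewrite length_app, Nat.add_1_r, S_INR.
    apply injective_projections; [apply (f_equal fst) in Hedge|apply (f_equal snd) in Hedge];
      simpl in *; lra.
Qed.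

Theorem corollary4p8 (N : nat) (x y z : word) (vx vy vz : word -> C) :
  is_vertex N x -> is_vertex N y -> is_vertex N z ->
  (exists r : word, y = x ++ r) -> (exists s : word, z = y ++ s) ->
  is_potential N x vx -> is_potential N y vy -> is_potential N z vz ->
  energy_is N (fun w => Cminus (vx w) (vy w)) (fun w => Cminus (vy w) (vz w)) (RtoC 0).
Proof.
  intros _ Vy Vz [r Er] [s Es] [_ [_ Rx]] Py Pz.
  pose proof Py as [Fy [_ Ry]]. pose proof Pz as [Fz _].
  assert (E := energy_is_subl _ _ _ _ _ _
                 (energy_is_subr _ _ _ _ _ _ (Rx _ Fy) (Rx _ Fz))
                 (energy_is_subr _ _ _ _ _ _ (Ry _ Fy) (Ry _ Fz))).
  rewrite (potential_on_prefix N y x r vy Vy Py Er),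
    (potential_on_prefix N y y [] vy Vy Py (eq_sym (app_nil_r y))),
    (potential_on_prefix N z x (r ++ s) vz Vz Pz ltac:(rewrite Es, Er, app_assoc; reflexivity)),
    (potential_on_prefix N z y s vz Vz Pz Es) in E.
  match type of E with energy_is _ _ _ ?S => replace (RtoC 0) with S by C_ring end.
  exact E.
Qed.
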